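(* Let $h>0$, $N\in\mathbb{N}$, $\mu>0$, $\alpha,\beta\in[0,1/2]$, and let $L_d:\mathbb{R}^d\times\mathbb{R}^d\to\mathbb{R}$ be $C^1$. Let $\gamma(z)=\rho(z)/\sigma(z)$ with $\rho_0/\sigma_0>0$ (e.g. $\gamma=\gamma_p$, $\gamma_p(z)=\sum_{j=1}^p\frac1j(1-z)^j$) and for real $a$ let $\omega^{(a)}_n$ be the Taylor coefficients of $(\gamma(z)/h)^{-a}$; define $\mathcal{J}_{-}^{a}x_k=\sum_{n=0}^{k}\omega_n^{(a)}x_{k-n}$, $\mathcal{J}_{+}^{a}y_k=\sum_{n=0}^{N-k}\omega_n^{(a)}y_{k+n}$. For sequences $x_d=(x_k)_{k=0}^N$, $y_d=(y_k)_{k=0}^N$ in $\mathbb{R}^d$ define the discrete action $$\mathcal{S}_d(x_d,y_d)=\sum_{k=0}^{N-1}\big(L_d(x_k,x_{k+1})+L_d(y_k,y_{k+1})\big)-\mu h\sum_{k=0}^{N}\mathcal{J}_{-}^{-\alpha}x_k\cdot\mathcal{J}_{+}^{-\beta}y_k .$$ Suppose $x_d,y_d$ satisfy, for all $k=1,\dots,N-1$, $$D_1L_d(x_k,x_{k+1})+D_2L_d(x_{k-1},x_k)=\mu h\,\mathcal{J}_{-}^{-(\alpha+\beta)}x_k,\qquad D_1L_d(y_k,y_{k+1})+D_2L_d(y_{k-1},y_k)=\mu h\,\mathcal{J}_{+}^{-(\alpha+\beta)}y_k,$$ where $D_i$ denotes the gradient with respect to the $i$-th argument. Then $(x_d,y_d)$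 is an extremal of $\mathcal{S}_d$ under restricted variations: for every sequence $(\delta x_k)_{k=0}^N$ in $\mathbb{R}^d$ with $\delta x_0=\delta x_N=0$, $$\frac{d}{d\epsilon}\Big|_{\epsilon=0}\mathcal{S}_d\big((x_k+\epsilon\delta x_k)_k,(y_k+\epsilon\delta x_k)_k\big)=0.$$
   Context: Restricted variations: the same variation $\delta x$ is applied to both doubled variables $x$ and $y$. $\mathcal{J}^{-\alpha}_{\pm}$ are convolution-quadrature approximations of left/right Riemann–Liouville fractional derivatives; the choice $\gamma_1(z)=1-z$ gives Grünwald–Letnikov weights. *)

From HB Require Import structures.
From mathcomp Require Import all_boot all_order all_algebra.
From mathcomp Require Import all_classical all_reals all_analysis.
Set Implicit Arguments. Unset Strict Implicit. Unset Printing Implicit Defensive.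
Import Order.TTheory GRing.Theory Num.Theory.
Import numFieldNormedType.Exports.
Local Open Scope ring_scope.

Section Defs.
Variable R : realType.

Definition gammaf (rho sigma : {poly R}) (z : R) : R := rho.[z] / sigma.[z].

Definition omega (rho sigma : {poly R}) (h a : R) (n : nat) : R :=
  derive1n n (fun z : R => powR (gammaf rho sigma z / h) (- a)) 0 / n`!%:R.

Definition Jminus d (rho sigma : {poly R}) (h a : R) (x : nat -> 'rV[R]_d)
  (k : nat) : 'rV[R]_d :=
  \sum_(n < k.+1) omega rho sigma h a n *: x (k - n)%N.

Definition Jplus d (rho sigma : {poly R}) (h a : R) (N : nat)
  (y : nat -> 'rV[R]_d) (k : nat) : 'rV[R]_d :=
  \sum_(n < (N - k).+1) omega rho sigma h a n *: y (k + n)%N.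

Definition dotv d (u v : 'rV[R]_d) : R := \sum_(j < d) u ord0 j * v ord0 j.

Definition grad1 d (L : 'rV[R]_d -> 'rV[R]_d -> R) (a b : 'rV[R]_d) : 'rV[R]_d :=
  \row_(j < d) 'D_(delta_mx ord0 j) (fun u => L u b) a.
Definition grad2 d (L : 'rV[R]_d -> 'rV[R]_d -> R) (a b : 'rV[R]_d) : 'rV[R]_d :=
  \row_(j < d) 'D_(delta_mx ord0 j) (fun u => L a u) b.

Definition C1 d (L : 'rV[R]_d -> 'rV[R]_d -> R) : Prop :=
  forall j : 'I_d,
    (forall a b : 'rV[R]_d,
        derivable (fun u => L u b) a (delta_mx ord0 j) /\
        derivable (fun u => L a u) b (delta_mx ord0 j)) /\
    continuous (fun p : 'rV[R]_d * 'rV[R]_d =>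
                  'D_(delta_mx ord0 j) (fun u => L u p.2) p.1) /\
    continuous (fun p : 'rV[R]_d * 'rV[R]_d =>
                  'D_(delta_mx ord0 j) (fun u => L p.1 u) p.2).

Definition action d (L : 'rV[R]_d -> 'rV[R]_d -> R) (rho sigma : {poly R})
  (h mu alpha beta : R) (N : nat) (x y : nat -> 'rV[R]_d) : R :=
  \sum_(k < N) (L (x k) (x k.+1) + L (y k) (y k.+1))
  - mu * h * \sum_(k < N.+1)
      dotv (Jminus rho sigma h (- alpha) x k) (Jplus rho sigma h (- beta) N y k).

End Defs.

From HB Require Import structures.
From mathcomp Require Import all_boot all_order all_algebra.
From mathcomp Require Import all_classical all_reals all_analysis.
From mathcomp.algebra_tactics Require Import ring lra.
From mathcomp Require Import zify.
Set Implicit Arguments. Unset Strict Implicit. Unset Printing Implicit Defensive.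
Import Order.TTheory GRing.Theory Num.Theory.
Import numFieldNormedType.Exports.
Local Open Scope ring_scope.

(* The variation of the Lagrangian part of [S_d] is
   [sum_k D1 L_d(x_k, x_(k+1)) . dx_k + D2 L_d(x_k, x_(k+1)) . dx_(k+1)]
   (a chain rule that needs only continuous partial derivatives, via the mean
   value theorem), and summation by parts with [dx_0 = dx_N = 0] turns it into
   [sum_k (D1 L_d(x_k, x_(k+1)) + D2 L_d(x_(k-1), x_k)) . dx_k].
   In the coupling term, [J_-^a] is adjoint to [J_+^a] for [sum_k u_k . v_k],
   and [J^(-alpha) J^(-beta) = J^(-(alpha+beta))]: near [0], where
   [gamma/h > 0], [(gamma/h)^(alpha+beta) = (gamma/h)^alpha (gamma/h)^beta]
   with smooth factors, so by the Leibniz rule the Taylor coefficients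
   [omega^(a+b)] are the Cauchy product of [omega^(a)] and [omega^(b)].
   The variation is therefore [sum_k (EL_k(x) + EL_k(y)
   - mu h (J_-^(-(alpha+beta)) x_k + J_+^(-(alpha+beta)) y_k)) . dx_k],
   which vanishes term by term by the discrete Euler-Lagrange equations. *)

Lemma binomial_sum_step (R : comNzRingType) (a b : nat -> R) n :
  \sum_(i < n.+1) 'C(n, i)%:R * (a i.+1 * b (n - i)%N + a i * b (n.+1 - i)%N) =
  \sum_(i < n.+2) 'C(n.+1, i)%:R * (a i * b (n.+1 - i)%N).
Proof.
rewrite [RHS]big_ord_recl /= bin0 subn0 mul1r.
under [X in _ = _ + X]eq_bigr => i _ do
  rewrite /bump add1n binS natrD mulrDl subSS.
rewrite big_split /=.
under eq_bigr => i _ do rewrite mulrDr.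
rewrite big_split /= [RHS]addrA [RHS]addrC; congr (_ + _).
rewrite big_ord_recl /= bin0 mul1r subn0; congr (_ + _).
rewrite [RHS]big_ord_recr /= bin_small // mul0r addr0.
by apply: eq_bigr => i _; rewrite /bump add1n subSS.
Qed.

Lemma near_eq_derive1 (R : realType) (f g : R -> R) z :
  (\forall t \near z, f t = g t) -> derive1 f z = derive1 g z.
Proof. by move=> fg; rewrite !derive1E; apply: near_eq_derive. Qed.

Lemma is_derive1_mul (R : realType) (f g : R -> R) (z df dg : R) :
  is_derive z 1 f df -> is_derive z 1 g dg ->
  is_derive z 1 (fun t => f t * g t) (df * g z + f z * dg).
Proof.
move=> hf hg; apply: (is_derive_eq (is_deriveM hf hg)).
by rewrite /GRing.scale /= mulrC addrC [g z * _]mulrC.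
Qed.

Lemma is_derive1_horner_div (R : realType) (p q : {poly R}) z : q.[z] != 0 ->
  is_derive z 1 (fun t => p.[t] / q.[t])
    ((p^`() * q - p * q^`()).[z] / (q ^+ 2).[z]).
Proof.
move=> qz.
apply: (is_derive_eq (is_derive1_mul (is_derive_poly p z)
  (is_deriveV qz (is_derive_poly q z)))).
rewrite !hornerE /GRing.scale /=.
by field; rewrite qz.
Qed.

Section SmoothOn.
Variables (R : realType) (U : set R).

Definition smooth_on (f : R -> R) :=
  forall n z, U z -> derivable (derive1n n f) z 1.

Hypothesis openU : open U.

Let near_U z : U z -> \forall t \near z, U t.
Proof. by move=> Uz; exact: openU. Qed.

Lemma derive1n_eq_on (f g : R -> R) : (forall z, U z -> f z = g z) ->
  forall n z, U z -> derive1n n f z = derive1n n g z.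
Proof.
move=> fg n; elim: n => [|n IH] z Uz; first exact: fg.
rewrite !derive1nS; apply: near_eq_derive1.
by near=> t; apply: IH; near: t; exact: near_U.
Unshelve. all: by end_near. Qed.

Lemma smooth_on_derive1 f : smooth_on f -> smooth_on (derive1 f).
Proof. by move=> sf n z Uz; rewrite -derive1Sn; exact: sf. Qed.

Lemma smooth_on_cst c : smooth_on (fun=> c).
Proof.
move=> n z Uz.
suff -> : derive1n n (fun=> c) = fun=> if n is 0 then c else 0.
  exact: derivable_cst.
elim: n => [//|n IH]; rewrite derive1nS IH; apply/funext => t.
by rewrite derive1_cst.
Qed.

Lemma derive1nD_on f g : smooth_on f -> smooth_on g -> forall n z, U z ->
  derive1n n (fun t => f t + g t) z = derive1n n f z + derive1n n g z.
Proof.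
move=> sf sg n; elim: n => [//|n IH] z Uz.
rewrite !derive1nS (@near_eq_derive1 _ _ (derive1n n f + derive1n n g)).
  by rewrite !derive1E deriveD //; [exact: sf | exact: sg].
by near=> t; apply: IH; near: t; exact: near_U.
Unshelve. all: by end_near. Qed.

Lemma smooth_onD f g : smooth_on f -> smooth_on g ->
  smooth_on (fun t => f t + g t).
Proof.
move=> sf sg n z Uz.
apply: (@near_eq_derivable _ _ _ (derive1n n f + derive1n n g)).
  by near=> t; rewrite derive1nD_on //; near: t; exact: near_U.
by apply: derivableD; [exact: sf | exact: sg].
Unshelve. all: by end_near. Qed.

Lemma derive1nM_on f g : smooth_on f -> smooth_on g -> forall n z, U z ->
  derive1n n (fun t => f t * g t) z =
  \sum_(i < n.+1) 'C(n, i)%:R * (derive1n i f z * derive1n (n - i) g z).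
Proof.
move=> sf sg n; elim: n => [|n IH] z Uz; first by rewrite big_ord1 bin0 mul1r.
rewrite derive1nS (@near_eq_derive1 _ _ (\sum_(i < n.+1) fun t =>
  'C(n, i)%:R * (derive1n i f t * derive1n (n - i) g t))); last first.
  by near=> t; rewrite fct_sumE IH //; near: t; exact: near_U.
rewrite -(binomial_sum_step (fun i => derive1n i f z) (fun i => derive1n i g z)).
rewrite derive1E.
suff dsum (i : 'I_n.+1) : is_derive z 1 (fun t =>
    'C(n, i)%:R * (derive1n i f t * derive1n (n - i) g t))
  ('C(n, i)%:R * (derive1n i.+1 f z * derive1n (n - i) g z +
                  derive1n i f z * derive1n (n.+1 - i) g z)).
  by have [_ ->] := is_derive_sum dsum.
have df : is_derive z 1 (derive1n i f) (derive1n i.+1 f z).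
  by rewrite derive1nS derive1E; apply: derivableP; exact: sf.
have dg : is_derive z 1 (derive1n (n - i) g) (derive1n (n.+1 - i) g z).
  rewrite subSn -1?ltnS // derive1nS derive1E.
  by apply: derivableP; exact: sg.
have [_ D] := is_derive1_mul df dg.
by apply: DeriveDef; [exact: derivableZ | rewrite deriveZ // D].
Unshelve. all: by end_near. Qed.

Lemma smooth_onM f g : smooth_on f -> smooth_on g ->
  smooth_on (fun t => f t * g t).
Proof.
move=> sf sg n z Uz.
apply: (@near_eq_derivable _ _ _ (\sum_(i < n.+1) fun t =>
  'C(n, i)%:R * (derive1n i f t * derive1n (n - i) g t))).
  by near=> t; rewrite fct_sumE derive1nM_on //; near: t; exact: near_U.
apply: derivable_sum => i; apply: derivableZ; apply: derivableM.
  exact: sf.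
exact: sg.
Unshelve. all: by end_near. Qed.

(* Differentiating [p E] with [E' = q E] gives [(p' + p q) E]: the factor
   stays smooth, so every derivative of [E] is of the form [p E]. *)
Lemma smooth_on_linear_ode E q : smooth_on q ->
  (forall z, U z -> is_derive z 1 E (q z * E z)) -> smooth_on E.
Proof.
move=> sq dE.
suff key n p : smooth_on p -> forall z, U z ->
    derivable (derive1n n (fun t => p t * E t)) z 1.
  move=> n z Uz; have := key n (fun=> 1) (smooth_on_cst (c := 1)) z Uz.
  by under eq_fun do rewrite mul1r.
elim: n p => [|n IH] p sp z Uz.
  by have [] := is_derive1_mul (derivableP (sp 0%N z Uz)) (dE z Uz).
apply: (@near_eq_derivable _ _ _ (derive1n n
  (fun t => (derive1 p t + p t * q t) * E t))); last first.
  by apply: IH => //; apply: smooth_onD; [exact: smooth_on_derive1 | exact: smooth_onM].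
near=> t; rewrite derive1Sn; apply/esym/derive1n_eq_on; last by near: t; exact: near_U.
move=> s Us; rewrite derive1E.
have := is_derive1_mul (derivableP (sp 0%N s Us)) (dE s Us).
rewrite derive1n0 => -[_ ->].
by rewrite -derive1E /=; ring.
Unshelve. all: by end_near. Qed.

Lemma smooth_on_horner_div (p s : {poly R}) : (forall z, U z -> s.[z] != 0) ->
  smooth_on (fun t => p.[t] / s.[t]).
Proof.
move=> s_neq0 n; elim: n p s s_neq0 => [|n IH] p s s_neq0 z Uz.
  by have [] := is_derive1_horner_div p (s_neq0 z Uz).
apply: (@near_eq_derivable _ _ _ (derive1n n
  (fun t => (p^`() * s - p * s^`()).[t] / (s ^+ 2).[t]))); last first.
  by apply: IH => // u Uu; rewrite horner_exp expf_neq0 //; exact: s_neq0.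
near=> t; rewrite derive1Sn; apply/esym/derive1n_eq_on; last by near: t; exact: near_U.
by move=> u Uu; rewrite derive1E; have [_ ->] := is_derive1_horner_div p (s_neq0 u Uu).
Unshelve. all: by end_near. Qed.

End SmoothOn.

Section TriangleSums.
Variable V : nmodType.

Lemma sum_triangle_exchange N (F : nat -> nat -> V) :
  \sum_(j < N.+1) \sum_(n < (N - j).+1) F j n =
  \sum_(n < N.+1) \sum_(j < (N - n).+1) F j n.
Proof.
have widen j : (j <= N)%N -> \sum_(n < (N - j).+1) F j n =
    \sum_(n < N.+1 | (j + n <= N)%N) F j n.
  move=> jN; rewrite (big_ord_widen N.+1 (F j)); last by rewrite ltnS leq_subr.
  by apply: eq_bigl => n; lia.
under eq_bigr => j _ do rewrite widen -1?ltnS //.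
rewrite (exchange_big_dep xpredT) //=; apply: eq_bigr => n _.
rewrite (big_ord_widen N.+1 (F ^~ n)); last by rewrite ltnS leq_subr.
by apply: eq_bigl => j; have := ltn_ord n; lia.
Qed.

Lemma sum_triangle_reindex N (F : nat -> nat -> V) :
  \sum_(k < N.+1) \sum_(n < k.+1) F k n =
  \sum_(j < N.+1) \sum_(n < (N - j).+1) F (j + n)%N n.
Proof.
rewrite (sum_triangle_exchange N (fun j n => F (j + n)%N n)).
under eq_bigr => k _ do rewrite (big_ord_widen N.+1 (F k)) ?ltn_ord //.
rewrite (exchange_big_dep xpredT) //=; apply: eq_bigr => n _.
rewrite -(big_mkord (fun k => (n <= k)%N) (fun k => F k n)).
rewrite (eq_bigl (fun k => true && (n <= k)%N)) //.
rewrite -big_nat_widenl // -{1}(add0n n) big_addn big_mkord.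
by have -> : (N.+1 - n = (N - n).+1)%N by have := ltn_ord n; lia.
Qed.

End TriangleSums.

Section Convolution.
Variables (R : comPzRingType) (V : lmodType R).
Implicit Types (c : nat -> R) (x : nat -> V).

Definition cauchy_prod c1 c2 (n : nat) : R :=
  \sum_(i < n.+1) c1 i * c2 (n - i)%N.

Definition causal_conv c x (k : nat) : V :=
  \sum_(n < k.+1) c n *: x (k - n)%N.

Definition anticausal_conv (N : nat) c x (k : nat) : V :=
  \sum_(n < (N - k).+1) c n *: x (k + n)%N.

Lemma causal_convDZ c x z (e : R) k :
  causal_conv c (fun i => x i + e *: z i) k = causal_conv c x k + e *: causal_conv c z k.
Proof.
rewrite /causal_conv scaler_sumr -big_split; apply: eq_bigr => n _.
by rewrite scalerDr !scalerA mulrC.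
Qed.

Lemma anticausal_convDZ N c x z (e : R) k :
  anticausal_conv N c (fun i => x i + e *: z i) k =
  anticausal_conv N c x k + e *: anticausal_conv N c z k.
Proof.
rewrite /anticausal_conv scaler_sumr -big_split; apply: eq_bigr => n _.
by rewrite scalerDr !scalerA mulrC.
Qed.

Lemma causal_conv_comp c1 c2 x k :
  causal_conv c2 (causal_conv c1 x) k = causal_conv (cauchy_prod c1 c2) x k.
Proof.
rewrite /causal_conv; under [RHS]eq_bigr => s _ do rewrite scaler_suml.
rewrite (sum_triangle_reindex k (fun s i => (c1 i * c2 (s - i)%N) *: x (k - s)%N)).
under eq_bigr => n _ do rewrite scaler_sumr.
apply: eq_bigr => n _; apply: eq_bigr => m _.
by rewrite scalerA addnK mulrC subnDA.
Qed.

Lemma anticausal_conv_comp N c1 c2 x k :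
  anticausal_conv N c1 (anticausal_conv N c2 x) k =
  anticausal_conv N (cauchy_prod c1 c2) x k.
Proof.
rewrite /anticausal_conv; under [RHS]eq_bigr => s _ do rewrite scaler_suml.
rewrite (sum_triangle_reindex (N - k)
  (fun s i => (c1 i * c2 (s - i)%N) *: x (k + s)%N)).
under eq_bigr => n _ do rewrite scaler_sumr subnDA.
rewrite (sum_triangle_exchange (N - k) (fun n m => c1 n *: (c2 m *: x (k + n + m)%N))).
apply: eq_bigr => m _; apply: eq_bigr => n _.
by rewrite scalerA addnK; congr (_ *: x _); lia.
Qed.

End Convolution.

Section DotProduct.
Variables (R : realType) (d : nat).
Implicit Types u v : 'rV[R]_d.

Lemma dotvC u v : dotv u v = dotv v u.
Proof. by apply: eq_bigr => j _; rewrite mulrC. Qed.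

Lemma dotvDl u1 u2 v : dotv (u1 + u2) v = dotv u1 v + dotv u2 v.
Proof. by rewrite /dotv -big_split; apply: eq_bigr => j _; rewrite mxE mulrDl. Qed.

Lemma dotvDr u v1 v2 : dotv u (v1 + v2) = dotv u v1 + dotv u v2.
Proof. by rewrite dotvC dotvDl !(dotvC u). Qed.

Lemma dotvNl u v : dotv (- u) v = - dotv u v.
Proof. by rewrite /dotv -sumrN; apply: eq_bigr => j _; rewrite mxE mulNr. Qed.

Lemma dotvZl c u v : dotv (c *: u) v = c * dotv u v.
Proof. by rewrite /dotv mulr_sumr; apply: eq_bigr => j _; rewrite mxE mulrA. Qed.

Lemma dotvZr c u v : dotv u (c *: v) = c * dotv u v.
Proof. by rewrite dotvC dotvZl dotvC. Qed.

Lemma dotv0l v : dotv 0 v = 0.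
Proof. by rewrite -(scale0r 0) dotvZl mul0r. Qed.

Lemma dotv0r u : dotv u 0 = 0.
Proof. by rewrite dotvC dotv0l. Qed.

Lemma dotv_suml I r (P : pred I) (F : I -> 'rV[R]_d) v :
  dotv (\sum_(i <- r | P i) F i) v = \sum_(i <- r | P i) dotv (F i) v.
Proof.
rewrite /dotv; under eq_bigr => j _ do rewrite summxE mulr_suml.
exact: exchange_big.
Qed.

Lemma dotv_sumr I r (P : pred I) (F : I -> 'rV[R]_d) u :
  dotv u (\sum_(i <- r | P i) F i) = \sum_(i <- r | P i) dotv u (F i).
Proof. by rewrite dotvC dotv_suml; apply: eq_bigr => i _; rewrite dotvC. Qed.

Lemma causal_conv_adjoint N (c : nat -> R) (u v : nat -> 'rV[R]_d) :
  \sum_(k < N.+1) dotv (causal_conv c u k) (v k) =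
  \sum_(k < N.+1) dotv (u k) (anticausal_conv N c v k).
Proof.
under eq_bigr => k _ do rewrite dotv_suml.
under [RHS]eq_bigr => k _ do rewrite dotv_sumr.
rewrite (sum_triangle_reindex N (fun k n => dotv (c n *: u (k - n)%N) (v k))).
apply: eq_bigr => j _; apply: eq_bigr => n _.
by rewrite addnK dotvZl dotvZr.
Qed.

End DotProduct.

Section OmegaSemigroup.
Variables (R : realType) (rho sigma : {poly R}) (h : R).
Hypotheses (h_gt0 : 0 < h) (gamma0_gt0 : 0 < rho`_0 / sigma`_0).

Let r := h^-1 *: rho.
Let g t := gammaf rho sigma t / h.

Let gE t : g t = r.[t] / sigma.[t].
Proof. by rewrite /g /gammaf /r hornerZ; ring. Qed.

Let U : set R := interior [set t | 0 < g t].

Let U_open : open U.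
Proof. exact: open_interior. Qed.

Let U_g_gt0 t : U t -> 0 < g t.
Proof. by move=> /interior_subset. Qed.

Let U_sigma_neq0 t : U t -> sigma.[t] != 0.
Proof.
by move=> /U_g_gt0; rewrite gE; apply: contraTneq => ->; rewrite invr0 mulr0 ltxx.
Qed.

Let U_r_neq0 t : U t -> r.[t] != 0.
Proof. by move=> /U_g_gt0; rewrite gE; apply: contraTneq => ->; rewrite mul0r ltxx. Qed.

Let U0 : U 0.
Proof.
have g0_gt0 : 0 < g 0 by rewrite /g /gammaf !horner_coef0 divr_gt0.
have s0 : sigma.[0] != 0.
  by move: g0_gt0; rewrite gE; apply: contraTneq => ->; rewrite invr0 mulr0 ltxx.
have [r_div_derivable _] := is_derive1_horner_div r s0.
have /cvgr_gt : {for 0, continuous (fun t => r.[t] / sigma.[t])}.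
  exact/differentiable_continuous/derivable1_diffP.
rewrite -gE => /(_ _ g0_gt0); rewrite /U /interior.
by apply: filterS => t; rewrite /= gE.
Qed.

Let powg c t := powR (g t) c.

Let dlog c t := (c *: (r^`() * sigma - r * sigma^`())).[t] / (sigma * r).[t].

Let is_derive_powg c t : U t -> is_derive t 1 (powg c) (dlog c t * powg c t).
Proof.
move=> Ut; have g_gt0 := U_g_gt0 Ut.
have -> : powg c = (@powR R ^~ c) \o (fun s => r.[s] / sigma.[s]).
  by apply/funext => s; rewrite /powg /= gE.
rewrite gE in g_gt0.
have D := is_derive1_comp (f := @powR R ^~ c) (g := fun s => r.[s] / sigma.[s])
  (@is_derive1_powR R c _ g_gt0)
  (is_derive1_horner_div r (U_sigma_neq0 Ut)).
apply: (is_derive_eq D).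
rewrite powRB ?(gt_eqF g_gt0) ?implybT // powRr1 ?ltW //.
rewrite /dlog /comp hornerZ !hornerM.
have s0 := U_sigma_neq0 Ut; have r0 := U_r_neq0 Ut.
by field; rewrite s0 r0.
Qed.

Let smooth_powg c : smooth_on U (powg c).
Proof.
apply: (smooth_on_linear_ode U_open (q := dlog c)); last exact: is_derive_powg.
apply: smooth_on_horner_div => // t Ut.
by rewrite hornerM mulf_neq0 //; [exact: U_sigma_neq0 | exact: U_r_neq0].
Qed.

Lemma omegaD a b : omega rho sigma h (a + b) =
  cauchy_prod (omega rho sigma h a) (omega rho sigma h b).
Proof.
apply/funext => n; rewrite /omega /cauchy_prod -/(powg (- (a + b))) opprD.
rewrite (@derive1n_eq_on _ _ U_open _ (fun t => powg (- a) t * powg (- b) t)) //;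
  last by move=> z Uz; rewrite /powg powRD // (gt_eqF (U_g_gt0 Uz)) implybT.
rewrite (derive1nM_on U_open (@smooth_powg (- a)) (@smooth_powg (- b))) // mulr_suml.
apply: eq_bigr => i _; rewrite -/(powg (- a)) -/(powg (- b)).
have hi : (i <= n)%N by rewrite -ltnS.
have /(congr1 (fun m => m%:R : R)) := bin_fact hi; rewrite !natrM => <-.
have fact_neq0 m : (m`!%:R : R) != 0 by rewrite pnatr_eq0 -lt0n fact_gt0.
have bin_neq0 : ('C(n, i)%:R : R) != 0 by rewrite pnatr_eq0 -lt0n bin_gt0.
by field; rewrite bin_neq0 !fact_neq0.
Qed.

End OmegaSemigroup.

Section PartialQuotients.
Variables (R : realType) (V : normedModType R).

Lemma is_derive_along_line (F : V -> R) (w v : V) (s : R) :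
  derivable F (w + s *: v) v ->
  is_derive s 1 (fun r => F (w + r *: v)) ('D_v F (w + s *: v)).
Proof.
move=> Fv.
have quotE : (fun t : R => t^-1 *: (((fun r => F (w + r *: v)) \o shift s) (t *: (1:R))
     - F (w + s *: v))) =
   (fun t : R => t^-1 *: ((F \o shift (w + s *: v)) (t *: v) - F (w + s *: v))).
  apply/funext => t /=; congr (_ *: (F _ - _)).
  by rewrite -[t *: (1:R)]/(t * 1) mulr1 scalerDl addrCA addrA.
apply: DeriveDef; first by rewrite /derivable quotE.
by rewrite /derive quotE.
Qed.

Lemma cvg_line (a u : V) : ((fun e : R => a + e *: u) @ 0^' --> a)%classic.
Proof.
have : {for 0, continuous (fun e : R => a + e *: u)}.
  have -> : a = a + 0 *: u by rewrite scale0r addr0.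
  by apply: cvgD; [exact: cvg_cst | apply: cvgZ; [exact: cvg_id | exact: cvg_cst]].
by move/continuous_withinNx; rewrite scale0r addr0.
Qed.

Lemma MVT_between (f df : R -> R) (x1 x2 : R) :
  (forall s : R, is_derive s (1 : R) f (df s)) ->
  exists xi, `|xi - x1| <= `|x2 - x1| /\ f x2 - f x1 = df xi * (x2 - x1).
Proof.
move=> fdf.
have cf : continuous f.
  by move=> s; apply/differentiable_continuous/derivable1_diffP; have [] := fdf s.
have [x12|x21] := leP x1 x2.
  have [c] := MVT_segment x12 (fun s _ => fdf s) (continuous_subspaceT cf).
  rewrite in_itv /= => /andP[c1 c2] E; exists c; split => //.
  by rewrite !ger0_norm ?subr_ge0 //; lra.
have [c] := MVT_segment (ltW x21) (fun s _ => fdf s) (continuous_subspaceT cf).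
rewrite in_itv /= => /andP[c1 c2] E; exists c; split.
  by rewrite !ler0_norm ?subr_le0 ?(ltW x21) //; lra.
by rewrite -[f x2 - f x1]opprB E -mulrN opprB.
Qed.

(* By the mean value theorem the quotient is [c] times the partial derivative
   at an intermediate point, which tends to [(t0, w0)]. *)
Lemma cvg_partial_quotient (T : topologicalType) (G : T -> V -> R)
    (p : R -> T) (w : R -> V) (t0 : T) (w0 v : V) (c : R) :
  (forall t z, derivable (G t) z v) ->
  {for (t0, w0), continuous (fun q : T * V => 'D_v (G q.1) q.2)} ->
  (p @ 0^' --> t0)%classic -> (w @ 0^' --> w0)%classic ->
  ((fun e : R => e^-1 * (G (p e) (w e + (e * c) *: v) - G (p e) (w e)))
    @ 0^' --> c * 'D_v (G t0) w0)%classic.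
Proof.
move=> Gv Dc pt0 ww0.
pose D q := 'D_v (G q.1) q.2.
have mvt e : exists s : R, `|s| <= `|e * c| /\
    G (p e) (w e + (e * c) *: v) - G (p e) (w e) = D (p e, w e + s *: v) * (e * c).
  have [s|s [s_le]] := @MVT_between (fun r => G (p e) (w e + r *: v))
    (fun r => D (p e, w e + r *: v)) 0 (e * c); first exact: is_derive_along_line.
  move=> sE; exists s; rewrite !subr0 in s_le sE.
  by rewrite scale0r addr0 in sE.
have [xi xiP] := choice mvt.
have xi0 : (xi @ 0^' --> 0)%classic.
  apply/cvgrPdist_lt => eps eps_gt0.
  have : \forall e \near dnbhs (0 : R), `|e| < eps / (`|c| + 1).
    by apply: dnbhs0_lt; rewrite divr_gt0 // ltr_wpDl.
  apply: filterS => e; rewrite ltr_pdivlMr ?ltr_wpDl // sub0r normrN => e_lt.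
  apply: le_lt_trans (xiP e).1 _; rewrite normrM.
  by have := normr_ge0 e; have := normr_ge0 c; nra.
have Dxi : ((fun e => c * D (p e, w e + xi e *: v)) @ 0^' --> c * D (t0, w0))%classic.
  have wxi : ((fun e => w e + xi e *: v) @ 0^' --> w0)%classic.
    rewrite -[w0]addr0 -(scale0r v).
    by apply: cvgD => //; apply: cvgZ => //; exact: cvg_cst.
  apply: cvgM; first exact: cvg_cst.
  exact: (cvg_comp _ _ (cvg_pair pt0 wxi) Dc).
apply: cvg_trans Dxi; apply: near_eq_cvg; near=> e.
have e_neq0 : e != 0 by near: e; exact: nbhs_dnbhs_neq.
by rewrite (xiP e).2; field.
Unshelve. all: by end_near. Qed.

Lemma is_derive0_quotient (phi : R -> R) (l : R) :
  ((fun e => e^-1 * (phi e - phi 0)) @ 0^' --> l)%classic ->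
  is_derive (0 : R) (1 : R) phi l.
Proof.
move=> phil.
have quotE : (fun t : R => t^-1 *: ((phi \o shift 0) (t *: (1:R)) - phi 0)) =
    (fun e => e^-1 * (phi e - phi 0)).
  by apply/funext => t; rewrite /comp /= addr0 -[t *: (1:R)]/(t * 1) mulr1.
apply: DeriveDef; first by rewrite /derivable quotE; apply/cvg_ex; exists l.
by rewrite /derive quotE; exact: cvg_lim.
Qed.

End PartialQuotients.

Section ChainRuleC1.
Variables (R : realType) (d : nat).
Local Notation V := 'rV[R]_d.

(* Going from [mask 0 u = 0] to [mask d u = u] changes one coordinate at a time. *)
Definition mask (m : nat) (u : V) : V :=
  \row_(j < d) (if (j < m)%N then u ord0 j else 0).

Lemma mask_telescope (F : V -> R) (u : V) :
  F u - F 0 = \sum_(i < d) (F (mask i u + u ord0 i *: delta_mx ord0 i) - F (mask i u)).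
Proof.
have maskS (i : 'I_d) : mask i.+1 u = mask i u + u ord0 i *: delta_mx ord0 i.
  apply/rowP => j; rewrite !mxE eqxx /=.
  have [->|ji] := eqVneq j i; first by rewrite ltnSn ltnn add0r mulr1.
  rewrite mulr0 addr0 ltnS leq_eqVlt.
  by have -> : (val j == val i) = false by exact/negbTE.
under eq_bigr => i _ do rewrite -maskS.
rewrite -(big_mkord xpredT (fun i => F (mask i.+1 u) - F (mask i u))).
by rewrite telescope_sumr //; congr (F _ - F _); apply/rowP => j; rewrite !mxE ?ltn_ord.
Qed.

Lemma is_derive_C1 (L : V -> V -> R) (a b u v : V) : C1 L ->
  is_derive (0 : R) (1 : R) (fun e => L (a + e *: u) (b + e *: v))
    (dotv (grad1 L a b) u + dotv (grad2 L a b) v).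
Proof.
move=> L_C1; apply: is_derive0_quotient.
have shiftE (z w : V) (e : R) (i : 'I_d) :
    z + e *: (mask i w + w ord0 i *: delta_mx ord0 i) =
    z + e *: mask i w + (e * w ord0 i) *: delta_mx ord0 i.
  by rewrite scalerDr scalerA addrA.
have quotE e : e^-1 * (L (a + e *: u) (b + e *: v) - L (a + 0 *: u) (b + 0 *: v)) =
    \sum_(i < d) e^-1 * (L (a + e *: u) (b + e *: mask i v + (e * v ord0 i) *: delta_mx ord0 i)
                         - L (a + e *: u) (b + e *: mask i v)) +
    \sum_(i < d) e^-1 * (L (a + e *: mask i u + (e * u ord0 i) *: delta_mx ord0 i) b
                         - L (a + e *: mask i u) b).
  rewrite -!mulr_sumr -mulrDr !scale0r !addr0; congr (_ * _).
  have := mask_telescope (fun w => L (a + e *: u) (b + e *: w)) v.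
  have := mask_telescope (fun w => L (a + e *: w) b) u.
  rewrite /= !scaler0 !addr0 => Tu Tv.
  under eq_bigr => i _ do rewrite -shiftE.
  under [X in _ = _ + X]eq_bigr => i _ do rewrite -shiftE.
  by rewrite -Tv -Tu addrA subrK.
under eq_fun do rewrite quotE.
have gradE (g : V) w : dotv g w = \sum_(i < d) w ord0 i * g ord0 i.
  by apply: eq_bigr => i _; rewrite mulrC.
rewrite addrC !gradE.
apply: cvgD; apply: cvg_big => [|i _]; try exact: add_continuous; rewrite mxE.
  have [_ [_ D2c]] := L_C1 i.
  apply: (@cvg_partial_quotient _ _ _ L (fun e => a + e *: u) (fun e => b + e *: mask i v)).
  - by move=> t z; have [/(_ t z) []] := L_C1 i.
  - exact: D2c.
  - exact: cvg_line.
  - exact: cvg_line.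
have [_ [D1c _]] := L_C1 i.
apply: (@cvg_partial_quotient _ _ _ (fun t z => L z t) (fun=> b) (fun e => a + e *: mask i u)).
- by move=> t z; have [/(_ z t) []] := L_C1 i.
- exact: (cvg_comp _ _ (@swap_continuous _ _ (b, a)) (D1c (a, b))).
- exact: cvg_cst.
- exact: cvg_line.
Qed.

End ChainRuleC1.

Section DiscreteAction.
Variables (R : realType) (d : nat).
Local Notation V := 'rV[R]_d.

Lemma is_derive_sumf n (f : 'I_n -> R -> R) (df : 'I_n -> R) :
  (forall i, is_derive (0 : R) (1 : R) (f i) (df i)) ->
  is_derive (0 : R) (1 : R) (fun e => \sum_(i < n) f i e) (\sum_(i < n) df i).
Proof.
have -> : (fun e => \sum_(i < n) f i e) = \sum_(i < n) f i.
  by apply/funext => e; rewrite fct_sumE.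
exact: is_derive_sum.
Qed.

Lemma is_derive_dotv_line (A B C D : V) :
  is_derive (0 : R) (1 : R) (fun e => dotv (A + e *: B) (C + e *: D))
    (dotv B C + dotv A D).
Proof.
pose p := (dotv A C)%:P + (dotv B C + dotv A D) *: 'X + dotv B D *: 'X ^+ 2.
have -> : (fun e => dotv (A + e *: B) (C + e *: D)) = horner p.
  apply/funext => e; rewrite !hornerE !dotvDl !dotvDr !dotvZl !dotvZr.
  by rewrite /GRing.scale /=; ring.
apply: (is_derive_eq (is_derive_poly p 0)).
rewrite /p !derivD derivC !derivZ derivX derivXn !hornerE.
by rewrite /GRing.scale /=; ring.
Qed.

Lemma sum_dotv_by_parts N (g1 g2 z : nat -> V) : z 0%N = 0 -> z N = 0 ->
  \sum_(k < N) (dotv (g1 k) (z k) + dotv (g2 k) (z k.+1)) =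
  \sum_(k < N.+1) dotv (g1 k + g2 k.-1) (z k).
Proof.
move=> z0 zN; under [RHS]eq_bigr => k _ do rewrite dotvDl.
rewrite !big_split /=; congr (_ + _).
  by rewrite big_ord_recr /= zN dotv0r addr0.
by rewrite big_ord_recl /= z0 dotv0r add0r.
Qed.

Lemma is_derive_discrete_lagrangian N (L : V -> V -> R) (x z : nat -> V) :
  C1 L -> z 0%N = 0 -> z N = 0 ->
  is_derive (0 : R) (1 : R)
    (fun e => \sum_(k < N) L (x k + e *: z k) (x k.+1 + e *: z k.+1))
    (\sum_(k < N.+1) dotv (grad1 L (x k) (x k.+1) + grad2 L (x k.-1) (x k)) (z k)).
Proof.
move=> L_C1 z0 zN.
(* [k.-1.+1 = k] except at [k = 0], where [z 0 = 0]. *)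
have -> : \sum_(k < N.+1)
    dotv (grad1 L (x k) (x k.+1) + grad2 L (x k.-1) (x k)) (z k) =
  \sum_(k < N.+1)
    dotv (grad1 L (x k) (x k.+1) + grad2 L (x k.-1) (x k.-1.+1)) (z k).
  by apply: eq_bigr => -[[|k] ?] _ //=; rewrite z0 !dotv0r.
rewrite -(sum_dotv_by_parts (fun k => grad1 L (x k) (x k.+1))
                            (fun k => grad2 L (x k) (x k.+1)) z0 zN).
by apply: is_derive_sumf => k; exact: is_derive_C1.
Qed.

Lemma JminusE rho sigma h a (x : nat -> V) :
  Jminus rho sigma h a x = causal_conv (omega rho sigma h a) x.
Proof. by []. Qed.

Lemma JplusE rho sigma h a N (y : nat -> V) :
  Jplus rho sigma h a N y = anticausal_conv N (omega rho sigma h a) y.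
Proof. by []. Qed.

Lemma is_derive_fractional_coupling (rho sigma : {poly R}) (h alpha beta : R)
    N (x y z : nat -> V) :
  0 < h -> 0 < rho`_0 / sigma`_0 ->
  is_derive (0 : R) (1 : R)
    (fun e => \sum_(k < N.+1)
       dotv (Jminus rho sigma h (- alpha) (fun k => x k + e *: z k) k)
            (Jplus rho sigma h (- beta) N (fun k => y k + e *: z k) k))
    (\sum_(k < N.+1) dotv (Jminus rho sigma h (- (alpha + beta)) x k
                           + Jplus rho sigma h (- (alpha + beta)) N y k) (z k)).
Proof.
move=> h_gt0 gamma0_gt0.
under eq_fun do under eq_bigr do
  rewrite JminusE JplusE causal_convDZ anticausal_convDZ.
rewrite !JminusE !JplusE.
set om := omega rho sigma h.
have omD : om (- (alpha + beta)) = cauchy_prod (om (- alpha)) (om (- beta)).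
  by rewrite /om opprD omegaD.
apply: (is_derive_eq (is_derive_sumf (fun k => is_derive_dotv_line _ _ _ _))).
rewrite big_split /= causal_conv_adjoint -(causal_conv_adjoint _ _ _ z).
rewrite -big_split /=; apply: eq_bigr => k _.
by rewrite omD causal_conv_comp anticausal_conv_comp dotvDl addrC [dotv (z k) _]dotvC.
Qed.

End DiscreteAction.

Unset Implicit Arguments.

Theorem theorem4p2 (R : realType) (d N : nat) (h mu alpha beta : R)
  (rho sigma : {poly R}) (L : 'rV[R]_d -> 'rV[R]_d -> R)
  (x y : nat -> 'rV[R]_d) :
  0 < h -> 0 < mu ->
  0 <= alpha <= 1/2 -> 0 <= beta <= 1/2 ->
  0 < rho`_0 / sigma`_0 ->
  C1 L ->
  (forall k : nat, (1 <= k)%N -> (k <= N.-1)%N ->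
     grad1 L (x k) (x k.+1) + grad2 L (x k.-1) (x k)
     = (mu * h) *: Jminus rho sigma h (- (alpha + beta)) x k) ->
  (forall k : nat, (1 <= k)%N -> (k <= N.-1)%N ->
     grad1 L (y k) (y k.+1) + grad2 L (y k.-1) (y k)
     = (mu * h) *: Jplus rho sigma h (- (alpha + beta)) N y k) ->
  forall dx : nat -> 'rV[R]_d, dx 0%N = 0 -> dx N = 0 ->
    is_derive (0 : R) (1 : R)
      (fun e : R => action L rho sigma h mu alpha beta N
                      (fun k => x k + e *: dx k) (fun k => y k + e *: dx k))
      0.
Proof.
move=> h_gt0 _ _ _ gamma0_gt0 L_C1 ELx ELy dx dx0 dxN.
rewrite /action; under eq_fun do rewrite big_split.
apply: (is_derive_eq (is_deriveB
  (is_deriveD (is_derive_discrete_lagrangian x L_C1 dx0 dxN)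
              (is_derive_discrete_lagrangian y L_C1 dx0 dxN))
  (is_deriveZ (mu * h)
     (is_derive_fractional_coupling alpha beta N x y dx h_gt0 gamma0_gt0)))).
rewrite -big_split /= /GRing.scale /= mulr_sumr -sumrB big1 // => k _.
rewrite -dotvDl -dotvZl -dotvNl -dotvDl.
have [->|k_neq0] := eqVneq (k : nat) 0%N; first by rewrite dx0 dotv0r.
have [->|k_neqN] := eqVneq (k : nat) N; first by rewrite dxN dotv0r.
have k_ge1 : (1 <= k)%N by rewrite lt0n.
have k_le : (k <= N.-1)%N by have := ltn_ord k; lia.
by rewrite ELx // ELy // -scalerDr subrr dotv0l.
Qed.
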